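(* In the two-state model with $\delta(t)=\tfrac12e^{-t}+\tfrac12e^{-2t}$, $g_1(a)=-a^2$ and $g_2(b)=2-(1-b)^2$, the generator $Q^*\sim(5/12,7/12)$ is the unique weak equilibrium, and it is a strong equilibrium.
   Context: Two-state model: $S=\{1,2\}$, admissible rows unrestricted ($D_i=E_i$), so every admissible generator has the form $Q=\begin{pmatrix}-a&a\\ b&-b\end{pmatrix}$ with $a,b\ge0$, written $Q\sim(a,b)$. The payoff is $f(t,1,(-a,a))=\delta(t)g_1(a)$ and $f(t,2,(b,-b))=\delta(t)g_2(b)$. $X$ is a continuous-time Markov chain with generator $Q$; $F(i,Q)=\mathbb E_{i,Q}[\int_0^\infty f(t,X_t,Q_{X_t})dt]$. $Q\otimes_\varepsilon Q'$: generator $Q$ on $[0,\varepsilon]$, then $Q'$ on $(\varepsilon,\infty)$, with expected payoff $F(i,Q\otimes_\varepsilon Q')$. $Q^*$ is a weak equilibrium if $\liminf_{\varepsilon\downarrow0}\varepsilon^{-1}(F(i,Q^* )-F(i,Q\otimes_\varepsilon Q^* ))\ge0$ for all admissible $Q$ and $i\in S$; a strong equilibrium if for every $i,Q$ there is $\varepsilon>0$ with $F(i,Q^* )\ge F(i,Q\otimes_{\varepsilon'}Q^* )$ for all $0<\varepsilon'\le\varepsilon$. *)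

From Stdlib Require Import Reals Lra ClassicalEpsilon.
Open Scope R_scope.

Inductive state := S1 | S2.

(** A generator Q = [[-a, a], [b, -b]] is represented by the pair (a, b). *)
Definition gen := (R * R)%type.
Definition admissible (q : gen) : Prop := 0 <= fst q /\ 0 <= snd q.

Definition has_integral (f : R -> R) (a b v : R) : Prop :=
  exists pr : Riemann_integrable f a b, RiemannInt pr = v.

Definition has_improper_integral (f : R -> R) (a v : R) : Prop :=
  (forall T, a <= T -> exists pr : Riemann_integrable f a T, True) /\
  (forall eps, 0 < eps -> exists M, forall T (pr : Riemann_integrable f a T),
      a <= T -> M <= T -> Rabs (RiemannInt pr - v) < eps).

Definition integral (f : R -> R) (a b : R) : R :=
  epsilon (inhabits 0) (fun v => has_integral f a b v).
Definition improper_integral (f : R -> R) (a : R) : R :=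
  epsilon (inhabits 0) (fun v => has_improper_integral f a v).

(** Transition probabilities P_t = exp(tQ) of the two-state chain with
    generator (a,b):  with s = a+b and phi(t) = int_0^t e^{-s u} du,
    P_12(t) = a phi(t), P_21(t) = b phi(t). *)
Definition phi (s t : R) : R :=
  if Req_EM_T s 0 then t else (1 - exp (- (s * t))) / s.

Definition trans (q : gen) (t : R) (i j : state) : R :=
  let a := fst q in let b := snd q in let p := phi (a + b) t in
  match i, j with
  | S1, S1 => 1 - a * p
  | S1, S2 => a * p
  | S2, S1 => b * p
  | S2, S2 => 1 - b * p
  end.

Definition delta (t : R) : R := / 2 * exp (- t) + / 2 * exp (- (2 * t)).
Definition g1 (a : R) : R := - a ^ 2.
Definition g2 (b : R) : R := 2 - (1 - b) ^ 2.

Definition f (t : R) (j : state) (q : gen) : R :=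
  match j with
  | S1 => delta t * g1 (fst q)
  | S2 => delta t * g2 (snd q)
  end.

(** F(i,Q) = E_{i,Q}[ int_0^oo f(t, X_t, Q_{X_t}) dt ]. *)
Definition F (i : state) (q : gen) : R :=
  improper_integral
    (fun t => trans q t i S1 * f t S1 q + trans q t i S2 * f t S2 q) 0.

(** F(i, Q (x)_eps Q'): Q on [0,eps], then Q' on (eps,oo). *)
Definition F_concat (i : state) (q : gen) (eps : R) (q' : gen) : R :=
  integral
    (fun t => trans q t i S1 * f t S1 q + trans q t i S2 * f t S2 q) 0 eps
  + improper_integral
    (fun t =>
       (trans q eps i S1 * trans q' (t - eps) S1 S1
        + trans q eps i S2 * trans q' (t - eps) S2 S1) * f t S1 q'
     + (trans q eps i S1 * trans q' (t - eps) S1 S2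
        + trans q eps i S2 * trans q' (t - eps) S2 S2) * f t S2 q') eps.

(** liminf_{eps -> 0+} (F(i,Qs) - F(i,Q (x)_eps Qs)) / eps >= 0,
    written out: for every eta > 0 the quotient is eventually > -eta. *)
Definition weak_equilibrium (qs : gen) : Prop :=
  admissible qs /\
  forall (q : gen) (i : state), admissible q ->
    forall eta, 0 < eta -> exists d, 0 < d /\
      forall eps, 0 < eps -> eps < d ->
        - eta < (F i qs - F_concat i q eps qs) / eps.

Definition strong_equilibrium (qs : gen) : Prop :=
  admissible qs /\
  forall (q : gen) (i : state), admissible q ->
    exists eps, 0 < eps /\
      forall eps', 0 < eps' -> eps' <= eps -> F i qs >= F_concat i q eps' qs.

From Pilot Require Import Defs.
From Stdlib Require Import Reals Lra Classical ClassicalEpsilon FunctionalExtensionality.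
From Coquelicot Require Import Coquelicot.
Open Scope R_scope.

(* Started at time x in the distribution p, the chain with generator q = (a, b)
   relaxes at rate a + b to its stationary law, so its expected reward-to-go
   [value q p x] is explicit, and its derivative along the chain is minus the
   current expected reward.  Hence F(i, Qs) - F(i, Q (x)_e Qs) is an explicit
   function [gain i q qs e], smooth in e and vanishing at e = 0.  Its slope at 0
   is (a - c)(a + c - M) in state 1 and (b - d)(b + d - (2 - M)) in state 2, where
   qs = (c, d) and M = [switch_value qs] is the value of moving from state 1 to
   state 2.  A weak equilibrium needs both slopes nonnegative for all a, b >= 0,
   i.e. c = max(0, M/2) and d = max(0, 1 - M/2), and the only solution is
   (5/12, 7/12).  There M = 5/6, the slopes are squares, and when a slope vanishes
   the second derivative is a positive square, so the gain is positive for small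
   e: Q* is a strong, hence weak, equilibrium. *)

Lemma derive_quotient (H : R -> R) L : is_derive H 0 L -> H 0 = 0 ->
  forall eta, 0 < eta ->
  exists d, 0 < d /\ forall e, 0 < e -> e < d -> Rabs (H e / e - L) < eta.
Proof.
  intros HD H0 eta Heta; apply is_derive_Reals in HD.
  destruct (HD eta Heta) as [d Hd]; exists d; split; [apply cond_pos |].
  intros e He Hed; specialize (Hd e ltac:(lra) ltac:(rewrite Rabs_pos_eq; lra)).
  now rewrite Rplus_0_l, H0, Rminus_0_r in Hd.
Qed.

Lemma derive_nonneg_of_liminf (H : R -> R) L : is_derive H 0 L -> H 0 = 0 ->
  (forall eta, 0 < eta -> exists d, 0 < d /\ forall e, 0 < e -> e < d -> - eta < H e / e) ->
  0 <= L.
Proof.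
  intros HD H0 Hliminf; destruct (Rle_lt_dec 0 L) as [|HL]; [assumption | exfalso].
  destruct (Hliminf (- L / 2)) as [d1 [Hd1 H1]]; [lra |].
  destruct (derive_quotient H L HD H0 (- L / 2)) as [d2 [Hd2 H2]]; [lra |].
  set (e := Rmin d1 d2 / 2).
  assert (0 < Rmin d1 d2) by (apply Rmin_pos; lra).
  pose proof (Rmin_l d1 d2); pose proof (Rmin_r d1 d2).
  specialize (H1 e ltac:(unfold e; lra) ltac:(unfold e; lra)).
  specialize (H2 e ltac:(unfold e; lra) ltac:(unfold e; lra)).
  apply Rabs_def2 in H2; lra.
Qed.

Lemma eventually_pos_of_derive (H : R -> R) L : is_derive H 0 L -> H 0 = 0 -> 0 < L ->
  exists eps, 0 < eps /\ forall e, 0 < e -> e <= eps -> 0 < H e.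
Proof.
  intros HD H0 HL.
  destruct (derive_quotient H L HD H0 (L / 2)) as [d [Hd Hq]]; [lra |].
  exists (d / 2); split; [lra |]; intros e He Hed.
  specialize (Hq e He ltac:(lra)); apply Rabs_def2 in Hq.
  assert (0 < H e / e) by lra.
  replace (H e) with (H e / e * e) by (field; lra); nra.
Qed.

Lemma eventually_pos_of_second_derive (H H1 : R -> R) L :
  H 0 = 0 -> (forall x, is_derive H x (H1 x)) -> H1 0 = 0 -> is_derive H1 0 L -> 0 < L ->
  exists eps, 0 < eps /\ forall e, 0 < e -> e <= eps -> 0 < H e.
Proof.
  intros H0 HD H10 HD1 HL.
  destruct (eventually_pos_of_derive H1 L HD1 H10 HL) as [eps [Heps Hpos]].
  exists eps; split; [assumption |]; intros e He Hee.
  destruct (MVT_cor2 H H1 0 e He) as [c [Hc Hce]].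
  { intros c _; apply is_derive_Reals, HD. }
  assert (0 < H1 c) by (apply Hpos; lra).
  rewrite H0, !Rminus_0_r in Hc; nra.
Qed.

Definition vanishes_at_infinity (G : R -> R) : Prop :=
  forall eps, 0 < eps -> exists M, forall T, M <= T -> Rabs (G T) < eps.

Lemma has_integral_of_derive (G f : R -> R) a b :
  (forall t, is_derive G t (f t)) -> (forall t, continuous f t) ->
  has_integral f a b (G b - G a).
Proof.
  intros HG Hf.
  assert (HI : is_RInt f a b (G b - G a)) by (apply (is_RInt_derive G f); auto).
  exists (ex_RInt_Reals_0 _ _ _ (ex_intro _ _ HI)).
  rewrite <- RInt_Reals; exact (is_RInt_unique _ _ _ _ HI).
Qed.

Lemma has_improper_integral_of_derive (G f : R -> R) a :
  (forall t, is_derive G t (f t)) -> (forall t, continuous f t) ->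
  vanishes_at_infinity G -> has_improper_integral f a (- G a).
Proof.
  intros HG Hf HGinf; split.
  - intros T _; destruct (has_integral_of_derive G f a T HG Hf) as [pr _]; now exists pr.
  - intros eps Heps; destruct (HGinf eps Heps) as [M HM]; exists M.
    intros T pr _ HT.
    destruct (has_integral_of_derive G f a T HG Hf) as [pr' Hpr'].
    rewrite (RiemannInt_P5 pr pr'), Hpr'.
    replace (G T - G a - - G a) with (G T) by ring; auto.
Qed.

Lemma integral_unique f a b v : has_integral f a b v -> integral f a b = v.
Proof.
  intros H; unfold integral.
  destruct (epsilon_spec (inhabits 0) (fun v => has_integral f a b v) (ex_intro _ v H))
    as [pr1 H1].
  destruct H as [pr2 H2]; rewrite <- H1, <- H2; apply RiemannInt_P5.
Qed.

Lemma improper_integral_unique f a v :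
  has_improper_integral f a v -> improper_integral f a = v.
Proof.
  intros H; unfold improper_integral.
  destruct (epsilon_spec (inhabits 0) (fun v => has_improper_integral f a v)
              (ex_intro _ v H)) as [_ Hv'].
  set (v' := epsilon _ _) in *; destruct H as [Hex Hv].
  destruct (Req_dec v' v) as [|Hne]; [assumption | exfalso].
  set (e := Rabs (v' - v) / 2).
  assert (He : 0 < e) by (apply Rdiv_lt_0_compat; [apply Rabs_pos_lt; lra | lra]).
  destruct (Hv' e He) as [M1 HM1], (Hv e He) as [M2 HM2].
  set (T := Rmax a (Rmax M1 M2)).
  assert (Ha : a <= T) by apply Rmax_l.
  assert (H1 : M1 <= T) by (eapply Rle_trans; [apply Rmax_l | apply Rmax_r]).
  assert (H2 : M2 <= T) by (eapply Rle_trans; [apply Rmax_r | apply Rmax_r]).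
  destruct (Hex T Ha) as [pr _].
  specialize (HM1 T pr Ha H1); specialize (HM2 T pr Ha H2).
  assert (Rabs (v' - v) <= Rabs (RiemannInt pr - v') + Rabs (RiemannInt pr - v)).
  { replace (v' - v) with (- (RiemannInt pr - v') + (RiemannInt pr - v)) by ring.
    eapply Rle_trans; [apply Rabs_triang | rewrite Rabs_Ropp; lra]. }
  unfold e in *; lra.
Qed.

Lemma exp_neg_le_1 x : 0 <= x -> exp (- x) <= 1.
Proof.
  intros Hx; rewrite <- exp_0.
  destruct (Rle_lt_or_eq_dec 0 x Hx) as [Hpos | <-].
  - left; apply exp_increasing; lra.
  - rewrite Ropp_0; lra.
Qed.

Lemma exp_neg_vanishes : vanishes_at_infinity (fun T => exp (- T)).
Proof.
  intros eps Heps; exists (1 - ln eps); intros T HT.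
  rewrite Rabs_pos_eq by (left; apply exp_pos).
  rewrite <- (exp_ln eps Heps); apply exp_increasing; lra.
Qed.

Definition kron (i j : state) : R :=
  match i, j with S1, S1 | S2, S2 => 1 | _, _ => 0 end.

Definition gap (q : gen) : R := fst q + snd q.

(* Stationary law.  For the null generator it is the junk value 0/0 = 0, which
   still makes [flow] the (constant) transition function. *)
Definition stat (q : gen) (j : state) : R :=
  match j with S1 => snd q / gap q | S2 => fst q / gap q end.

Definition rate (q : gen) (i j : state) : R :=
  match i, j with
  | S1, S1 => - fst q | S1, S2 => fst q
  | S2, S1 => snd q | S2, S2 => - snd q
  end.

Definition reward (q : gen) (j : state) : R :=
  match j with S1 => g1 (fst q) | S2 => g2 (snd q) end.

Definition dot (p v : state -> R) : R := p S1 * v S1 + p S2 * v S2.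

Definition mean_reward (q : gen) : R := dot (stat q) (reward q).

Definition flow (q : gen) (p : state -> R) (t : R) (j : state) : R :=
  stat q j + (p j - stat q j) * exp (- (gap q * t)).

Definition flow_rate (q : gen) (p : state -> R) (t : R) (j : state) : R :=
  - gap q * (p j - stat q j) * exp (- (gap q * t)).

Lemma f_reward t j q : Defs.f t j q = delta t * reward q j.
Proof. now destruct j. Qed.

Lemma gap_ge0 q : admissible q -> 0 <= gap q.
Proof. unfold admissible, gap; lra. Qed.

Lemma flow_rate_0 q i : admissible q -> flow_rate q (kron i) 0 = rate q i.
Proof.
  destruct q as [a b]; unfold admissible, flow_rate, rate, stat, gap; simpl; intros [Ha Hb].
  apply functional_extensionality; intros j.
  rewrite Rmult_0_r, Ropp_0, exp_0, Rmult_1_r.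
  destruct (Req_dec (a + b) 0) as [Hs|Hs].
  - assert (a = 0) by lra; assert (b = 0) by lra; subst.
    destruct i, j; simpl; lra.
  - destruct i, j; simpl; field; lra.
Qed.

Lemma trans_mix q p t j : admissible q -> p S1 + p S2 = 1 ->
  p S1 * trans q t S1 j + p S2 * trans q t S2 j = flow q p t j.
Proof.
  destruct q as [a b]; unfold admissible, trans, flow, phi, stat, gap; simpl; intros [Ha Hb] Hp.
  destruct (Req_EM_T (a + b) 0) as [Hs|Hs].
  - assert (a = 0) by lra; assert (b = 0) by lra; subst.
    rewrite Rplus_0_r, Rmult_0_l, Ropp_0, exp_0.
    unfold Rdiv; rewrite Rinv_0. destruct j; lra.
  - destruct j; simpl; replace (p S1) with (1 - p S2) by lra; field; lra.
Qed.

Lemma flow_0 q p : flow q p 0 = p.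
Proof.
  apply functional_extensionality; intros j.
  unfold flow; rewrite Rmult_0_r, Ropp_0, exp_0; ring.
Qed.

Lemma trans_row_sum q t i : trans q t i S1 + trans q t i S2 = 1.
Proof. destruct i; simpl; ring. Qed.

Lemma trans_flow q t i : admissible q -> trans q t i = flow q (kron i) t.
Proof.
  intros Hq; apply functional_extensionality; intros j.
  rewrite <- trans_mix by (auto; destruct i; simpl; ring).
  destruct i; simpl; ring.
Qed.

(* [tail l x] is the integral of [delta t * exp (- l * (t - x))] over [x, +oo). *)
Definition tail (l x : R) : R :=
  exp (- x) / (2 * (1 + l)) + exp (- (2 * x)) / (2 * (2 + l)).

Lemma exp_double x : exp (- (2 * x)) = exp (- x) * exp (- x).
Proof. rewrite <- exp_plus; f_equal; ring. Qed.

(* Expected delta-discounted reward collected from time x on by the chain with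
   generator q that is in the distribution p at time x. *)
Definition value (q : gen) (p : state -> R) (x : R) : R :=
  mean_reward q * tail 0 x + (dot p (reward q) - mean_reward q) * tail (gap q) x.

Definition value_rate (q : gen) (p dp : state -> R) (x : R) : R :=
  - delta x * dot p (reward q)
  + (dot dp (reward q) + gap q * (dot p (reward q) - mean_reward q)) * tail (gap q) x.

Lemma is_derive_value q P dP x : admissible q ->
  (forall j, is_derive (fun t => P t j) x (dP j)) ->
  is_derive (fun t => value q (P t) t) x (value_rate q (P x) dP x).
Proof.
  intros Hq HP.
  (* [auto_derive] only recognises unknown functions applied to the variable. *)
  set (p1 := fun t => P t S1); set (p2 := fun t => P t S2).
  change (is_derive
    (fun t => mean_reward q * tail 0 t
              + (p1 t * reward q S1 + p2 t * reward q S2 - mean_reward q) * tail (gap q) t)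
    x (value_rate q (P x) dP x)).
  unfold tail; auto_derive.
  - split; [exists (dP S1) | split; [exists (dP S2) | exact I]]; apply HP.
  - replace (Derive (fun t : R => p1 t) x) with (dP S1)
      by (symmetry; apply is_derive_unique, HP).
    replace (Derive (fun t : R => p2 t) x) with (dP S2)
      by (symmetry; apply is_derive_unique, HP).
    pose proof (gap_ge0 q Hq).
    unfold value_rate, delta, dot, p1, p2, reward, tail; rewrite exp_double; field; lra.
Qed.

Lemma is_derive_flow q p x0 j t :
  is_derive (fun u => flow q p (u - x0) j) t (flow_rate q p (t - x0) j).
Proof. unfold flow, flow_rate; auto_derive; [exact I | unfold Rminus; ring]. Qed.

Lemma value_rate_flow q p u x :
  value_rate q (flow q p u) (flow_rate q p u) x = - delta x * dot (flow q p u) (reward q).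
Proof. unfold value_rate, mean_reward, flow, flow_rate, dot; ring. Qed.

Lemma is_derive_value_flow q p x0 t : admissible q ->
  is_derive (fun u => - value q (flow q p (u - x0)) u) t
    (delta t * dot (flow q p (t - x0)) (reward q)).
Proof.
  intros Hq.
  pose proof (is_derive_value q (fun u => flow q p (u - x0)) (flow_rate q p (t - x0)) t Hq
    (fun j => is_derive_flow q p x0 j t)) as H.
  cbv beta in H; rewrite value_rate_flow in H.
  replace (delta t * _) with (- (- delta t * dot (flow q p (t - x0)) (reward q))) by ring.
  exact (is_derive_opp _ _ _ H).
Qed.

Lemma continuous_reward_flow q p x0 t :
  continuous (fun u => delta u * dot (flow q p (u - x0)) (reward q)) t.
Proof.
  apply (@ex_derive_continuous R_AbsRing R_NormedModule).
  unfold delta, dot, flow; auto_derive; exact I.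
Qed.

Lemma tail_bounds l T : 0 <= l -> 0 <= T -> 0 <= tail l T <= exp (- T).
Proof.
  intros Hl HT; unfold tail; rewrite exp_double.
  pose proof (exp_pos (- T)); pose proof (exp_neg_le_1 T HT).
  assert (0 < / (2 * (1 + l)) <= / 2)
    by (split; [apply Rinv_0_lt_compat | apply Rinv_le_contravar]; lra).
  assert (0 < / (2 * (2 + l)) <= / 2)
    by (split; [apply Rinv_0_lt_compat | apply Rinv_le_contravar]; lra).
  unfold Rdiv; split; nra.
Qed.

Lemma value_flow q p u x :
  value q (flow q p u) x
  = mean_reward q * tail 0 x
    + (dot p (reward q) - mean_reward q) * exp (- (gap q * u)) * tail (gap q) x.
Proof. unfold value, mean_reward, flow, dot; ring. Qed.

Lemma value_flow_bound q p x0 T : admissible q -> 0 <= T -> x0 <= T ->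
  Rabs (value q (flow q p (T - x0)) T)
  <= (Rabs (mean_reward q) + Rabs (dot p (reward q) - mean_reward q)) * exp (- T).
Proof.
  intros Hq HT HTx; rewrite value_flow.
  destruct (tail_bounds 0 T ltac:(lra) HT) as [H0 H0'].
  destruct (tail_bounds (gap q) T (gap_ge0 q Hq) HT) as [Hs Hs'].
  assert (HE : 0 <= exp (- (gap q * (T - x0))) <= 1).
  { split; [left; apply exp_pos | apply exp_neg_le_1].
    pose proof (gap_ge0 q Hq); nra. }
  eapply Rle_trans; [apply Rabs_triang |]; rewrite !Rabs_mult.
  rewrite (Rabs_pos_eq (tail 0 T)), (Rabs_pos_eq (tail (gap q) T)),
    (Rabs_pos_eq (exp _)) by lra.
  pose proof (Rabs_pos (mean_reward q)).
  pose proof (Rabs_pos (dot p (reward q) - mean_reward q)).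
  assert (0 <= exp (- (gap q * (T - x0))) * tail (gap q) T <= exp (- T)) by nra.
  nra.
Qed.

Lemma value_flow_vanishes q p x0 : admissible q ->
  vanishes_at_infinity (fun T => value q (flow q p (T - x0)) T).
Proof.
  intros Hq eps Heps.
  set (C := Rabs (mean_reward q) + Rabs (dot p (reward q) - mean_reward q)).
  assert (HC : 0 <= C)
    by (unfold C; pose proof (Rabs_pos (mean_reward q));
        pose proof (Rabs_pos (dot p (reward q) - mean_reward q)); lra).
  destruct (exp_neg_vanishes (eps / (C + 1))) as [M HM]; [apply Rdiv_lt_0_compat; lra |].
  exists (Rmax M (Rmax 0 x0)); intros T HT.
  pose proof (Rmax_l M (Rmax 0 x0)); pose proof (Rmax_r M (Rmax 0 x0)).
  pose proof (Rmax_l 0 x0); pose proof (Rmax_r 0 x0).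
  specialize (HM T ltac:(lra)); rewrite Rabs_pos_eq in HM by (left; apply exp_pos).
  eapply Rle_lt_trans; [apply value_flow_bound; [exact Hq | lra | lra] |].
  apply Rle_lt_trans with ((C + 1) * exp (- T)); [fold C; pose proof (exp_pos (- T)); nra |].
  replace eps with ((C + 1) * (eps / (C + 1))) by (field; lra).
  apply Rmult_lt_compat_l; lra.
Qed.

Lemma has_integral_reward q p x0 a b : admissible q ->
  has_integral (fun t => delta t * dot (flow q p (t - x0)) (reward q)) a b
    (value q (flow q p (a - x0)) a - value q (flow q p (b - x0)) b).
Proof.
  intros Hq.
  pose proof (has_integral_of_derive _ _ a b (fun t => is_derive_value_flow q p x0 t Hq)
    (continuous_reward_flow q p x0)) as H.
  cbv beta in H; replace (_ - _) with (- value q (flow q p (b - x0)) b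
    - - value q (flow q p (a - x0)) a) by ring; exact H.
Qed.

Lemma has_improper_integral_reward q p x0 a : admissible q ->
  has_improper_integral (fun t => delta t * dot (flow q p (t - x0)) (reward q)) a
    (value q (flow q p (a - x0)) a).
Proof.
  intros Hq.
  pose proof (has_improper_integral_of_derive _ _ a (fun t => is_derive_value_flow q p x0 t Hq)
    (continuous_reward_flow q p x0)) as H.
  cbv beta in H; rewrite Ropp_involutive in H; apply H.
  intros eps Heps; destruct (value_flow_vanishes q p x0 Hq eps Heps) as [M HM].
  exists M; intros T HT; rewrite Rabs_Ropp; auto.
Qed.

Lemma integrand_from_state q i : admissible q ->
  (fun t => trans q t i S1 * Defs.f t S1 q + trans q t i S2 * Defs.f t S2 q)
  = (fun t => delta t * dot (flow q (kron i) (t - 0)) (reward q)).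
Proof.
  intros Hq; apply functional_extensionality; intros t.
  rewrite Rminus_0_r, trans_flow, !f_reward by exact Hq; unfold dot; ring.
Qed.

Lemma integrand_from_distribution q p x0 : admissible q -> p S1 + p S2 = 1 ->
  (fun t => (p S1 * trans q (t - x0) S1 S1 + p S2 * trans q (t - x0) S2 S1) * Defs.f t S1 q
          + (p S1 * trans q (t - x0) S1 S2 + p S2 * trans q (t - x0) S2 S2) * Defs.f t S2 q)
  = (fun t => delta t * dot (flow q p (t - x0)) (reward q)).
Proof.
  intros Hq Hp; apply functional_extensionality; intros t.
  rewrite !trans_mix, !f_reward by assumption; unfold dot; ring.
Qed.

Lemma F_value i q : admissible q -> Defs.F i q = value q (kron i) 0.
Proof.
  intros Hq; unfold Defs.F; rewrite (integrand_from_state q i Hq).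
  rewrite (improper_integral_unique _ _ _ (has_improper_integral_reward q (kron i) 0 0 Hq)).
  now rewrite Rminus_0_r, flow_0.
Qed.

Lemma F_concat_value i q e qs : admissible q -> admissible qs ->
  F_concat i q e qs
  = value q (kron i) 0 - value q (flow q (kron i) e) e + value qs (flow q (kron i) e) e.
Proof.
  intros Hq Hqs; unfold F_concat.
  rewrite (integrand_from_state q i Hq),
    (integrand_from_distribution qs (trans q e i) e Hqs (trans_row_sum q e i)).
  rewrite (integral_unique _ _ _ _ (has_integral_reward q (kron i) 0 0 e Hq)).
  rewrite (improper_integral_unique _ _ _ (has_improper_integral_reward qs _ e e Hqs)).
  rewrite !Rminus_0_r, Rminus_diag, !flow_0, (trans_flow q e i Hq); ring.
Qed.

Definition gain (i : state) (q qs : gen) (e : R) : R :=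
  value qs (kron i) 0 - value q (kron i) 0
  + value q (flow q (kron i) e) e - value qs (flow q (kron i) e) e.

Definition gain_rate (i : state) (q qs : gen) (e : R) : R :=
  value_rate q (flow q (kron i) e) (flow_rate q (kron i) e) e
  - value_rate qs (flow q (kron i) e) (flow_rate q (kron i) e) e.

Lemma F_sub_F_concat i q qs e : admissible q -> admissible qs ->
  Defs.F i qs - F_concat i q e qs = gain i q qs e.
Proof.
  intros Hq Hqs; rewrite F_value, F_concat_value by assumption; unfold gain; ring.
Qed.

Lemma gain_0 i q qs : gain i q qs 0 = 0.
Proof. unfold gain; rewrite flow_0; ring. Qed.

Lemma gain_self i qs e : gain i qs qs e = 0.
Proof. unfold gain; ring. Qed.

Lemma is_derive_gain i q qs e : admissible q -> admissible qs ->
  is_derive (gain i q qs) e (gain_rate i q qs e).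
Proof.
  intros Hq Hqs.
  assert (HP : forall j, is_derive (fun t => flow q (kron i) t j) e (flow_rate q (kron i) e j)).
  { intros j; pose proof (is_derive_flow q (kron i) 0 j e) as H; rewrite Rminus_0_r in H.
    eapply is_derive_ext; [| exact H]; intros t; cbv beta; now rewrite Rminus_0_r. }
  pose proof (is_derive_minus _ _ e _ _
    (is_derive_plus _ _ e _ _ (is_derive_const (value qs (kron i) 0 - value q (kron i) 0) e)
       (is_derive_value q _ _ e Hq HP))
    (is_derive_value qs _ _ e Hqs HP)) as H.
  rewrite plus_zero_l in H; exact H.
Qed.

Lemma delta_0 : delta 0 = 1.
Proof. unfold delta; rewrite Rmult_0_r, Ropp_0, exp_0; field. Qed.

Lemma gain_rate_0 i q qs : admissible q -> admissible qs ->
  gain_rate i q qs 0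
  = reward qs i - reward q i
    - dot (fun j => rate q i j - rate qs i j) (reward qs) * tail (gap qs) 0.
Proof.
  intros Hq Hqs; unfold gain_rate; rewrite flow_0.
  rewrite <- (flow_rate_0 qs i Hqs), <- (flow_rate_0 q i Hq).
  unfold value_rate; rewrite delta_0; unfold mean_reward, dot, flow_rate.
  rewrite !Rmult_0_r, Ropp_0, exp_0; destruct i; simpl; ring.
Qed.

Definition switch_value (qs : gen) : R := (reward qs S2 - reward qs S1) * tail (gap qs) 0.

Lemma gain_rate_0_S1 a b c d : admissible (a, b) -> admissible (c, d) ->
  gain_rate S1 (a, b) (c, d) 0 = (a - c) * (a + c - switch_value (c, d)).
Proof.
  intros Hq Hqs; rewrite gain_rate_0 by assumption.
  unfold switch_value, dot, rate, reward, g1; simpl; ring.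
Qed.

Lemma gain_rate_0_S2 a b c d : admissible (a, b) -> admissible (c, d) ->
  gain_rate S2 (a, b) (c, d) 0 = (b - d) * (b + d - (2 - switch_value (c, d))).
Proof.
  intros Hq Hqs; rewrite gain_rate_0 by assumption.
  unfold switch_value, dot, rate, reward, g2; simpl; ring.
Qed.

Definition qstar : gen := (5 / 12, 7 / 12).

Lemma is_derive_gain_rate_S1 b : 0 <= b ->
  is_derive (gain_rate S1 (5 / 12, b) qstar) 0 (5 / 12 * (b - 7 / 12) ^ 2).
Proof.
  intros Hb.
  unfold gain_rate, value_rate, flow, flow_rate, mean_reward, dot, stat, gap, reward, kron,
    tail, delta, g1, g2, qstar; simpl.
  auto_derive; [repeat split; lra |].
  rewrite !Rmult_0_r, !Ropp_0, !exp_0; field; lra.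
Qed.

Lemma is_derive_gain_rate_S2 a : 0 <= a ->
  is_derive (gain_rate S2 (a, 7 / 12) qstar) 0 (7 / 12 * (a - 5 / 12) ^ 2).
Proof.
  intros Ha.
  unfold gain_rate, value_rate, flow, flow_rate, mean_reward, dot, stat, gap, reward, kron,
    tail, delta, g1, g2, qstar; simpl.
  auto_derive; [repeat split; lra |].
  rewrite !Rmult_0_r, !Ropp_0, !exp_0; field; lra.
Qed.

Lemma qstar_admissible : admissible qstar.
Proof. unfold admissible, qstar; simpl; lra. Qed.

Lemma switch_value_qstar : switch_value qstar = 5 / 6.
Proof.
  unfold switch_value, reward, gap, tail, g1, g2, qstar; simpl.
  rewrite !Rmult_0_r, !Ropp_0, !exp_0; field.
Qed.

Lemma gain_eventually_pos i q : admissible q -> q <> qstar ->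
  exists eps, 0 < eps /\ forall e, 0 < e -> e <= eps -> 0 < gain i q qstar e.
Proof.
  destruct q as [a b]; intros Hq Hne; pose proof Hq as [Ha Hb]; simpl in Ha, Hb.
  pose proof (gain_0 i (a, b) qstar) as H0.
  pose proof (fun e => is_derive_gain i (a, b) qstar e Hq qstar_admissible) as HD.
  destruct i.
  - pose proof (gain_rate_0_S1 a b (5 / 12) (7 / 12) Hq qstar_admissible) as H1.
    fold qstar in H1; rewrite switch_value_qstar in H1.
    destruct (Req_dec a (5 / 12)) as [-> | Ha'].
    + assert (b <> 7 / 12) by (intros ->; exact (Hne eq_refl)).
      apply (eventually_pos_of_second_derive _ _ (5 / 12 * (b - 7 / 12) ^ 2) H0 HD);
        [rewrite H1; ring | apply is_derive_gain_rate_S1, Hb |].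
      assert (0 < (b - 7 / 12) ^ 2) by (apply pow2_gt_0; lra); lra.
    + apply (eventually_pos_of_derive _ _ (HD 0) H0).
      rewrite H1; replace (a + 5 / 12 - 5 / 6) with (a - 5 / 12) by field.
      apply Rsqr_pos_lt; lra.
  - pose proof (gain_rate_0_S2 a b (5 / 12) (7 / 12) Hq qstar_admissible) as H1.
    fold qstar in H1; rewrite switch_value_qstar in H1.
    destruct (Req_dec b (7 / 12)) as [-> | Hb'].
    + assert (a <> 5 / 12) by (intros ->; exact (Hne eq_refl)).
      apply (eventually_pos_of_second_derive _ _ (7 / 12 * (a - 5 / 12) ^ 2) H0 HD);
        [rewrite H1; ring | apply is_derive_gain_rate_S2, Ha |].
      assert (0 < (a - 5 / 12) ^ 2) by (apply pow2_gt_0; lra); lra.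
    + apply (eventually_pos_of_derive _ _ (HD 0) H0).
      rewrite H1; replace (b + 7 / 12 - (2 - 5 / 6)) with (b - 7 / 12) by field.
      apply Rsqr_pos_lt; lra.
Qed.

Lemma strong_equilibrium_qstar : strong_equilibrium qstar.
Proof.
  split; [exact qstar_admissible |]; intros q i Hq.
  destruct (classic (q = qstar)) as [-> | Hne].
  - exists 1; split; [lra |]; intros e _ _.
    rewrite <- (Rminus_0_r (Defs.F i qstar)), <- (gain_self i qstar e),
      <- (F_sub_F_concat i qstar qstar e) by exact qstar_admissible; lra.
  - destruct (gain_eventually_pos i q Hq Hne) as [eps [Heps Hpos]].
    exists eps; split; [exact Heps |]; intros e He Hee.
    pose proof (F_sub_F_concat i q qstar e Hq qstar_admissible).
    pose proof (Hpos e He Hee); lra.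
Qed.

Lemma weak_of_strong qs : strong_equilibrium qs -> weak_equilibrium qs.
Proof.
  intros [Hqs Hstrong]; split; [exact Hqs |]; intros q i Hq eta Heta.
  destruct (Hstrong q i Hq) as [eps [Heps Hge]]; exists eps; split; [exact Heps |].
  intros e He Hee; specialize (Hge e He ltac:(lra)).
  assert (0 <= (Defs.F i qs - F_concat i q e qs) / e) by (apply Rdiv_le_0_compat; lra).
  lra.
Qed.

Lemma weak_gain_rate_nonneg i q qs : weak_equilibrium qs -> admissible q ->
  0 <= gain_rate i q qs 0.
Proof.
  intros [Hqs Hweak] Hq.
  apply (derive_nonneg_of_liminf (gain i q qs));
    [apply is_derive_gain; assumption | apply gain_0 |].
  intros eta Heta; destruct (Hweak q i Hq eta Heta) as [d [Hd Hlim]].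
  exists d; split; [exact Hd |]; intros e He Hed.
  rewrite <- F_sub_F_concat by assumption; auto.
Qed.

Lemma nonneg_minimizer c M : 0 <= c ->
  (forall x, 0 <= x -> 0 <= (x - c) * (x + c - M)) -> c = Rmax 0 (M / 2).
Proof.
  intros Hc Hmin; destruct (Rle_lt_dec 0 M) as [HM | HM].
  - rewrite Rmax_right by lra.
    specialize (Hmin (M / 2) ltac:(lra)).
    replace ((M / 2 - c) * (M / 2 + c - M)) with (- (M / 2 - c) ^ 2) in Hmin by field.
    nra.
  - rewrite Rmax_left by lra.
    destruct (Rle_lt_or_eq_dec 0 c Hc) as [Hpos | <-]; [exfalso | reflexivity].
    specialize (Hmin (c / 2) ltac:(lra)); nra.
Qed.

Lemma tail_0_bounds l : 0 <= l -> 0 < tail l 0 /\ tail l 0 * (1 + l) <= 1.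
Proof.
  intros Hl; unfold tail; rewrite !Rmult_0_r, !Ropp_0, !exp_0; split.
  - apply Rplus_lt_0_compat; apply Rdiv_lt_0_compat; lra.
  - replace ((1 / (2 * (1 + l)) + 1 / (2 * (2 + l))) * (1 + l))
      with (1 - 1 / (2 * (2 + l))) by (field; lra).
    assert (0 < 1 / (2 * (2 + l))) by (apply Rdiv_lt_0_compat; lra); lra.
Qed.

Lemma best_response_fixed_point c d : 0 <= c -> 0 <= d ->
  c = Rmax 0 (switch_value (c, d) / 2) -> d = Rmax 0 ((2 - switch_value (c, d)) / 2) ->
  c = 5 / 12 /\ d = 7 / 12.
Proof.
  intros Hc Hd Hcmax Hdmax.
  destruct (tail_0_bounds (c + d) ltac:(lra)) as [HW HW1].
  assert (HM : switch_value (c, d) = (2 - (1 - d) ^ 2 + c ^ 2) * tail (c + d) 0)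
    by (unfold switch_value, reward, gap, g1, g2; simpl; ring).
  set (M := switch_value (c, d)) in *; set (W := tail (c + d) 0) in *.
  destruct (Rle_lt_dec 0 M) as [HM0 | HM0]; [destruct (Rle_lt_dec M 2) as [HM2 | HM2] |].
  - rewrite Rmax_right in Hcmax, Hdmax by lra.
    assert (Hsum : c + d = 1) by lra.
    assert (HW' : W = 5 / 12).
    { unfold W; rewrite Hsum; unfold tail; rewrite !Rmult_0_r, !Ropp_0, !exp_0; field. }
    replace (1 - d) with c in HM by lra; rewrite HW' in HM; split; nra.
  - rewrite Rmax_right in Hcmax by lra; rewrite Rmax_left in Hdmax by lra.
    exfalso; subst d; rewrite Rplus_0_r in HW1; simpl in HM; nra.
  - rewrite Rmax_left in Hcmax by lra; rewrite Rmax_right in Hdmax by lra.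
    exfalso; subst c; rewrite Rplus_0_l in HW1; simpl in HM; nra.
Qed.

Lemma weak_equilibrium_unique qs : weak_equilibrium qs -> qs = qstar.
Proof.
  intros Hweak; destruct qs as [c d]; pose proof (proj1 Hweak) as [Hc Hd]; simpl in Hc, Hd.
  assert (Hcmax : c = Rmax 0 (switch_value (c, d) / 2)).
  { apply nonneg_minimizer; [exact Hc |]; intros x Hx.
    rewrite <- (gain_rate_0_S1 x 0 c d) by (split; simpl; lra).
    apply weak_gain_rate_nonneg; [exact Hweak | split; simpl; lra]. }
  assert (Hdmax : d = Rmax 0 ((2 - switch_value (c, d)) / 2)).
  { apply nonneg_minimizer; [exact Hd |]; intros y Hy.
    rewrite <- (gain_rate_0_S2 0 y c d) by (split; simpl; lra).
    apply weak_gain_rate_nonneg; [exact Hweak | split; simpl; lra]. }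
  destruct (best_response_fixed_point c d Hc Hd Hcmax Hdmax) as [-> ->]; reflexivity.
Qed.

Theorem mainTheorem12 :
  weak_equilibrium (5 / 12, 7 / 12) /\
  (forall qs : gen, weak_equilibrium qs -> qs = (5 / 12, 7 / 12)) /\
  strong_equilibrium (5 / 12, 7 / 12).
Proof.
  split; [| split].
  - exact (weak_of_strong qstar strong_equilibrium_qstar).
  - exact weak_equilibrium_unique.
  - exact strong_equilibrium_qstar.
Qed.
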